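(* Let $T=(F_0,F_1)$ be a template of order $10$ and type $(4,4,4,4)$, and let $N$ be a $4$-net of order $10$ that is a refinement of $T$. Then: (i) the four points of $T$ of weight $4$ (type $1111$) lie in pairwise distinct rows and pairwise distinct columns; (ii) each row of $Q_2$ and each column of $Q_3$ contains exactly three cells of type ${*}{*}10$ and three cells of type ${*}{*}01$; (iii) each relational line of $N$ in $\Pi_2\cup\Pi_3$ contains exactly one point of $Q_1$ and exactly three points in each of $Q_2$, $Q_3$ and $Q_4$; (iv) each column of $Q_2$ and each row of $Q_3$ contains exactly two cells of type ${*}{*}01$ and two of type ${*}{*}10$; and each row and each column of $Q_4$ contains exactly two cells of type $0011$ and four cells of type $0000$. Here ${*}$ denotes an arbitrary bit.
   Context: A $k$-net of order $n$: a set of $n^2$ points and $kn$ lines (subsets of size $n$), each point on $k$ lines, lines partitioned into $k$ parallel classes $\Pi_0,\dots,\Pi_{k-1}$ of $n$ pairwise disjoint lines, lines from different classes meeting in exactly one point. A binary frequency square of order $n$ with frequencies $(n-\lambda,\lambda)$ is an $n\times n$ array over $\{0,1\}$ with exactly $\lambda$ ones in each row and each column; two such squares with frequencies $(n-\lambda,\lambda)$, $(n-\mu,\mu)$ are orthogonal if each pair $(a,b)\in\{0,1\}^2$ occurs in exactly $f_a f'_b$ cells, where $f_0=n-\lambda,f_1=\lambda,f'_0=n-\mu,f'_1=\mu$. For $n$ even and even $\lambda_0,\dots,\lambda_{k-1}$, a template of order $n$ and type $(\lambda_0,\dots,\lambda_{k-1})$ is a list $(F_0,\dots,F_{k-3})$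 of mutually orthogonal binary frequency squares of order $n$, $F_{t-2}$ having frequencies $(n-\lambda_t,\lambda_t)$, where rows $0,\dots,\lambda_0-1$ and columns $0,\dots,\lambda_1-1$ are called relational; the type of cell $(i,j)$ is the string $(x,y,F_0[i,j],\dots,F_{k-3}[i,j])$ with $x=1$ iff row $i$ is relational and $y=1$ iff column $j$ is relational; its weight is the number of ones in its type, and it is required that every cell has weight $\equiv\frac12\sum_i\lambda_i\pmod 2$. A $k$-net $N$ with parallel classes $\Pi_0,\dots,\Pi_{k-1}$ is a refinement of $T$ if the lines of $\Pi_0$ and $\Pi_1$ can be labelled $0,\dots,n-1$ (rows and columns) so that, identifying each point with the cell (row label, column label), for each $t\ge2$ every line of $\Pi_t$ consists of cells on which $F_{t-2}$ is constant; a line of $\Pi_t$ ($t\ge 2$) is relational if $F_{t-2}$ equals $1$ on it, and relational rows/columns are the lines of $\Pi_0,\Pi_1$ labelled by relational rows/columns. For order $10$ and type $(4,4,4,4)$ the quadrants are: $Q_1$ = rows $0$–$3$ × columns $0$–$3$; $Q_2$ = rows $0$–$3$ × columns $4$–$9$; $Q_3$ = rows $4$–$9$ × columns $0$–$3$; $Q_4$ = rows $4$–$9$ × columns $4$–$9$. A ''row of $Q_2$'' means the 6 cells of one relational row in $Q_2$, a ''column of $Q_2$'' the 4 cells of one non-relational column in $Q_2$, and similarly for the other quadrants. *)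

From mathcomp Require Import all_boot fingroup perm.
Set Implicit Arguments. Unset Strict Implicit. Unset Printing Implicit Defensive.

(* cells of an n x n array: (row, column) *)
Definition cell n := ('I_n * 'I_n)%type.

Definition freq_square n (lam : nat) (F : 'I_n -> 'I_n -> bool) : Prop :=
  (forall i, #|[set j | F i j]| = lam) /\ (forall j, #|[set i | F i j]| = lam).

Definition freq n (lam : nat) (a : bool) : nat := if a then lam else n - lam.

Definition orthogonal_fs n (lam mu : nat) (F G : 'I_n -> 'I_n -> bool) : Prop :=
  forall a b : bool,
    #|[set c : cell n | (F c.1 c.2 == a) && (G c.1 c.2 == b)]| = freq n lam a * freq n mu b.

Definition ctype n (l0 l1 : nat) (F0 F1 : 'I_n -> 'I_n -> bool) (c : cell n)
  : bool * bool * bool * bool := (c.1 < l0, c.2 < l1, F0 c.1 c.2, F1 c.1 c.2).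

Definition weight n l0 l1 F0 F1 (c : cell n) : nat :=
  let: (x, y, a, b) := ctype l0 l1 F0 F1 c in (x : nat) + y + a + b.

Definition template4 n (l0 l1 l2 l3 : nat) (F0 F1 : 'I_n -> 'I_n -> bool) : Prop :=
  [/\ ~~ odd n, ~~ odd l0, ~~ odd l1, ~~ odd l2 & ~~ odd l3] /\
  freq_square l2 F0 /\ freq_square l3 F1 /\ orthogonal_fs l2 l3 F0 F1 /\
  (forall c : cell n, odd (weight l0 l1 F0 F1 c) = odd ((l0 + l1 + l2 + l3)./2)).

(* a k-net of order n on the point set P: lines t i is the i-th line of the
   parallel class Pi_t *)
Definition is_net (P : finType) n k (lines : 'I_k -> 'I_n -> {set P}) : Prop :=
  [/\ #|P| = n ^ 2,
      (forall t i, #|lines t i| = n),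
      (forall p : P, #|[set ti : 'I_k * 'I_n | p \in lines ti.1 ti.2]| = k),
      (forall t i j, i != j -> [disjoint lines t i & lines t j]) &
      (forall t t' i j, t != t' -> #|lines t i :&: lines t' j| = 1)].

Definition cls (t : nat) : 'I_4 := inord t.

(* labels of the Pi_0 line (row) and Pi_1 line (column) through p, under the
   labellings s0, s1 of the lines of Pi_0, Pi_1 *)
Definition row_of (P : finType) n (lines : 'I_4 -> 'I_n.+1 -> {set P})
  (s0 : {perm 'I_n.+1}) (p : P) : 'I_n.+1 :=
  s0 (odflt ord0 [pick i | p \in lines (cls 0) i]).
Definition col_of (P : finType) n (lines : 'I_4 -> 'I_n.+1 -> {set P})
  (s1 : {perm 'I_n.+1}) (p : P) : 'I_n.+1 :=
  s1 (odflt ord0 [pick i | p \in lines (cls 1) i]).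
Definition cell_of (P : finType) n (lines : 'I_4 -> 'I_n.+1 -> {set P})
  (s0 s1 : {perm 'I_n.+1}) (p : P) : cell n.+1 :=
  (row_of lines s0 p, col_of lines s1 p).

(* the square F_{t-2} associated with class t = 2, 3 *)
Definition sq n (F0 F1 : 'I_n -> 'I_n -> bool) (t : nat) := if t == 2 then F0 else F1.

Definition refines (P : finType) n (lines : 'I_4 -> 'I_n.+1 -> {set P})
  (F0 F1 : 'I_n.+1 -> 'I_n.+1 -> bool) (s0 s1 : {perm 'I_n.+1}) : Prop :=
  forall t, t \in [:: 2; 3] -> forall j p q,
    p \in lines (cls t) j -> q \in lines (cls t) j ->
    let cp := cell_of lines s0 s1 p in let cq := cell_of lines s0 s1 q in
    sq F0 F1 t cp.1 cp.2 = sq F0 F1 t cq.1 cq.2.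

Definition relational_line (P : finType) n (lines : 'I_4 -> 'I_n.+1 -> {set P})
  (F0 F1 : 'I_n.+1 -> 'I_n.+1 -> bool) (s0 s1 : {perm 'I_n.+1}) (t : nat) j : Prop :=
  forall p, p \in lines (cls t) j ->
    let c := cell_of lines s0 s1 p in sq F0 F1 t c.1 c.2 = true.

Definition Q1 (c : cell 10) : bool := (c.1 < 4) && (c.2 < 4).
Definition Q2 (c : cell 10) : bool := (c.1 < 4) && (4 <= c.2).
Definition Q3 (c : cell 10) : bool := (4 <= c.1) && (c.2 < 4).
Definition Q4 (c : cell 10) : bool := (4 <= c.1) && (4 <= c.2).

From mathcomp Require Import all_boot fingroup perm.
From mathcomp Require Import zify.
Set Implicit Arguments. Unset Strict Implicit. Unset Printing Implicit Defensive.

(* The weight condition says that F0 and F1 differ exactly at the cells (i, j)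
   where exactly one of i, j is relational.  On a relational row the two squares
   therefore agree on the 4 relational columns and differ on the other 6; as each
   has 4 ones in the row, the counts a + d0 = a + d1 = 4, d0 + d1 = 6 force one cell
   of type 1111 and three cells of each mixed type.  Non-relational rows and all
   columns are handled alike, which gives (i), (ii) and (iv).
   For (iii), a line L of Pi_2 meets every line of the other classes exactly once,
   so it has 4 points in relational rows and 4 in relational columns.  F1 is
   constant on the lines of Pi_3, and double counting its 40 ones shows that 4 of
   these lines are relational; hence F1 = 1 at exactly 4 points of L.  If L is
   relational then F0 = 1 on L, so by parity F1 = 1 exactly on Q1 and Q4, and the
   resulting linear system has the unique solution 1, 3, 3, 3. *)


Lemma card_set_sum (T : finType) (p : pred T) : #|[set x | p x]| = \sum_x p x.
Proof. by rewrite -sum1dep_card big_mkcond; apply: eq_bigr => x _; case: (p x). Qed.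

Lemma card_setin_sum (T : finType) (A : {pred T}) (p : pred T) :
  #|[set x in A | p x]| = \sum_(x in A) p x.
Proof.
rewrite card_set_sum [RHS]big_mkcond; apply: eq_bigr => x _.
by case: (x \in A).
Qed.

Lemma card_set_pair (T U : finType) (R : T -> U -> bool) :
  #|[set x : T * U | R x.1 x.2]| = \sum_t #|[set u | R t u]|.
Proof.
rewrite card_set_sum -(pair_bigA _ (fun t u => R t u : nat)).
by apply: eq_bigr => t _; rewrite card_set_sum.
Qed.

Lemma sum_inj_card (T U : finType) (A : {pred T}) (f : T -> U) (h : U -> nat) :
  {in A &, injective f} -> #|A| = #|U| -> \sum_(x in A) h (f x) = \sum_u h u.
Proof.
move=> f_inj card_A; rewrite -big_imset //=.
have -> : f @: A = setT.
  by apply/eqP; rewrite eqEcard subsetT cardsT card_in_imset // card_A leqnn.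
by apply: eq_bigl => u; rewrite inE.
Qed.

Lemma card_ord_lt4 : #|[set j : 'I_10 | j < 4]| = 4.
Proof. by rewrite -sum1dep_card big_mkcond !big_ord_recr big_ord0. Qed.

Lemma card_ord_ge4 : #|[set j : 'I_10 | 4 <= j]| = 6.
Proof. by rewrite -sum1dep_card big_mkcond !big_ord_recr big_ord0. Qed.

Section XorPartition.
Variables (T : finType) (f g differ agree : pred T).
Hypothesis differE : forall x, differ x = f x (+) g x.
Hypothesis agreeE : forall x, agree x = ~~ differ x.

Lemma card_xor_partition :
  let d1 := #|[set x | differ x && (f x && ~~ g x)]| in
  let d2 := #|[set x | differ x && (~~ f x && g x)]| in
  let a1 := #|[set x | agree x && (f x && g x)]| in
  let a0 := #|[set x | agree x && (~~ f x && ~~ g x)]| in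
  [/\ d1 + d2 = #|[set x | differ x]|, a1 + a0 = #|[set x | agree x]|,
      a1 + d1 = #|[set x | f x]| & a1 + d2 = #|[set x | g x]|].
Proof.
cbv zeta; rewrite !card_set_sum -!big_split /=.
by split; apply: eq_bigr => x _; rewrite ?agreeE differE; case: (f x); case: (g x).
Qed.
End XorPartition.

Lemma card_split_differ_ge4 (f g : pred 'I_10) :
  (forall j, f j (+) g j = (4 <= j)) ->
  #|[set j : 'I_10 | f j]| = 4 -> #|[set j : 'I_10 | g j]| = 4 ->
  [/\ #|[set j : 'I_10 | (j < 4) && (f j && g j)]| = 1,
      #|[set j : 'I_10 | (4 <= j) && (f j && ~~ g j)]| = 3 &
      #|[set j : 'I_10 | (4 <= j) && (~~ f j && g j)]| = 3].
Proof.
move=> xor_fg card_f card_g.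
have [] := @card_xor_partition _ f g (fun j : 'I_10 => 4 <= j) (fun j : 'I_10 => j < 4)
  (fun j => esym (xor_fg j)) (fun j => ltnNge j 4).
rewrite /= card_ord_ge4 card_f card_g; split; lia.
Qed.

Lemma card_split_differ_lt4 (f g : pred 'I_10) :
  (forall j, f j (+) g j = (j < 4)) ->
  #|[set j : 'I_10 | f j]| = 4 -> #|[set j : 'I_10 | g j]| = 4 ->
  [/\ #|[set j : 'I_10 | (j < 4) && (~~ f j && g j)]| = 2,
      #|[set j : 'I_10 | (j < 4) && (f j && ~~ g j)]| = 2,
      #|[set j : 'I_10 | (4 <= j) && (f j && g j)]| = 2 &
      #|[set j : 'I_10 | (4 <= j) && (~~ f j && ~~ g j)]| = 4].
Proof.
move=> xor_fg card_f card_g.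
have [] := @card_xor_partition _ f g (fun j : 'I_10 => j < 4) (fun j : 'I_10 => 4 <= j)
  (fun j => esym (xor_fg j)) (fun j => leqNgt 4 j).
rewrite /= card_ord_lt4 card_ord_ge4 card_f card_g; split; lia.
Qed.

Lemma template4_xor n l0 l1 l2 l3 (F0 F1 : 'I_n -> 'I_n -> bool) :
  template4 l0 l1 l2 l3 F0 F1 -> ~~ odd (l0 + l1 + l2 + l3)./2 ->
  forall i j, F0 i j (+) F1 i j = (i < l0) (+) (j < l1).
Proof.
move=> [_ [_ [_ [_ parity]]]] half_even i j.
have := parity (i, j); rewrite (negbTE half_even) /weight /ctype /= !oddD !oddb.
by case: (i < l0); case: (j < l1); case: (F0 i j); case: (F1 i j).
Qed.

Section NetLines.
Variables (P : finType) (n k : nat) (lines : 'I_k -> 'I_n.+1 -> {set P}).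
Hypothesis net : is_net lines.

Lemma net_line_unique t p i j : p \in lines t i -> p \in lines t j -> i = j.
Proof.
case: net => _ _ _ disj _ pi pj; apply/eqP; apply: contraT => neq_ij.
by have := disjoint_setI0 (disj t i j neq_ij); move/setP/(_ p); rewrite !inE pi pj.
Qed.

Lemma net_point_on_line t p : exists i, p \in lines t i.
Proof.
case: net => _ _ on_k _ _.
(* each class has at most one line through p, and p is on k lines in all *)
pose c t' := #|[set i | p \in lines t' i]|.
have c_le1 t' : c t' <= 1.
  by apply/card_le1_eqP => i j; rewrite !inE => pi pj; apply: net_line_unique pj pi.
have sum_c : \sum_t' c t' = k by rewrite -card_set_pair on_k.
have : \sum_t' (1 - c t') + \sum_t' c t' = k.
  rewrite -big_split /=; under eq_bigr do rewrite subnK //.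
  by rewrite sum_nat_const card_ord muln1.
rewrite sum_c => /(canRL (addnK k)) /eqP; rewrite subnn sum_nat_eq0 => /forallP /(_ t).
by rewrite subn_eq0 => /card_gt0P [i]; rewrite inE; exists i.
Qed.

Definition line_through t p := odflt ord0 [pick i | p \in lines t i].

Lemma line_throughP t p : p \in lines t (line_through t p).
Proof.
rewrite /line_through; case: pickP => [//|none].
by have [i] := net_point_on_line t p; rewrite none.
Qed.

Lemma line_through_eq t p i : p \in lines t i -> line_through t p = i.
Proof. by move=> pi; apply: net_line_unique (line_throughP t p) pi. Qed.

Lemma net_meet_unique t t' i j p q : t != t' ->
  p \in lines t i -> q \in lines t i -> p \in lines t' j -> q \in lines t' j -> p = q.
Proof.
case: net => _ _ _ _ meet1 neq_tt' pi qi pj qj.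
have /eqP/cards1P [x meet_x] := meet1 t t' i j neq_tt'.
have : p \in lines t i :&: lines t' j by rewrite inE pi pj.
have : q \in lines t i :&: lines t' j by rewrite inE qi qj.
by rewrite meet_x !inE => /eqP -> /eqP ->.
Qed.

Lemma line_through_inj t t' j : t != t' -> {in lines t j &, injective (line_through t')}.
Proof.
move=> neq_tt' p q pj qj eq_pq.
apply: (net_meet_unique neq_tt' pj qj (line_throughP t' p)).
by rewrite eq_pq line_throughP.
Qed.

Lemma sum_line_transversal t t' j (h : 'I_n.+1 -> nat) : t != t' ->
  \sum_(p in lines t j) h (line_through t' p) = \sum_i h i.
Proof.
move=> neq_tt'; apply: sum_inj_card; first exact: line_through_inj.
by case: net => _ -> _ _ _; rewrite card_ord.
Qed.

Lemma sum_parallel_class t (h : P -> nat) : \sum_i \sum_(p in lines t i) h p = \sum_p h p.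
Proof.
rewrite (exchange_big_dep predT) //=; apply: eq_bigr => p _.
rewrite (big_pred1 (line_through t p)) // => i /=.
apply/idP/eqP => [pi|->]; last exact: line_throughP.
exact: net_line_unique pi (line_throughP t p).
Qed.
End NetLines.

Lemma cls_neq a b : a < 4 -> b < 4 -> a != b -> cls a != cls b.
Proof. by move=> a4 b4; apply: contra_neq => /(congr1 val); rewrite /= !inordK. Qed.

Section Refinement.
Variables (P : finType) (n : nat) (lines : 'I_4 -> 'I_n.+1 -> {set P}).
Variables (s0 s1 : {perm 'I_n.+1}).
Hypothesis net : is_net lines.

Local Notation cell_at := (cell_of lines s0 s1).

Lemma cell_of_inj : injective cell_at.
Proof.
move=> p q [/perm_inj eq_row /perm_inj eq_col].
have neq01 : cls 0 != cls 1 by apply: cls_neq.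
apply: (net_meet_unique net neq01 (line_throughP net _ p) _ (line_throughP net _ p)).
  by rewrite [line_through _ _ p]eq_row line_throughP.
by rewrite [line_through _ _ p]eq_col line_throughP.
Qed.

Lemma sum_cell_of (h : cell n.+1 -> nat) : \sum_p h (cell_at p) = \sum_c h c.
Proof.
rewrite -(@sum_inj_card _ _ predT _ h (in2W cell_of_inj)); first exact: eq_bigl.
by case: net => card_P _ _ _ _; rewrite card_P card_prod card_ord.
Qed.

(* [(cell_at p).1] unfolds to [s0 (line_through lines (cls 0) p)], and similarly for columns. *)
Lemma sum_line_rows t j (h : 'I_n.+1 -> nat) : t != cls 0 ->
  \sum_(p in lines t j) h (cell_at p).1 = \sum_i h i.
Proof.
by move=> neq_t0; rewrite [RHS](reindex_inj (@perm_inj _ s0)); apply: sum_line_transversal.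
Qed.

Lemma sum_line_cols t j (h : 'I_n.+1 -> nat) : t != cls 1 ->
  \sum_(p in lines t j) h (cell_at p).2 = \sum_i h i.
Proof.
by move=> neq_t1; rewrite [RHS](reindex_inj (@perm_inj _ s1)); apply: sum_line_transversal.
Qed.

Section RefinedSquare.
Variables (F : 'I_n.+1 -> 'I_n.+1 -> bool) (lam : nat) (t' : 'I_4).
Hypothesis F_rows : forall i, #|[set j | F i j]| = lam.
Hypothesis F_const : forall j p q, p \in lines t' j -> q \in lines t' j ->
  F (cell_at p).1 (cell_at p).2 = F (cell_at q).1 (cell_at q).2.

Local Notation F_at p := (F (cell_at p).1 (cell_at p).2).

Lemma card_refined_line t j : t != t' -> #|[set p in lines t j | F_at p]| = lam.
Proof.
move=> neq_tt'.
pose v k := [exists q in lines t' k, F_at q].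
have F_at_v p : F_at p = v (line_through lines t' p).
  apply/idP/existsP => [Fp | [q /andP [qk Fq]]].
    by exists p; rewrite line_throughP ?Fp.
  by rewrite (F_const (line_throughP net t' p) qk).
(* double counting the ones of F: by rows, and by the lines of class t' *)
have count_ones : \sum_k v k * n.+1 = lam * n.+1.
  transitivity (\sum_c (F c.1 c.2 : nat)).
    rewrite -sum_cell_of -(sum_parallel_class net t'); apply: eq_bigr => k _.
    rewrite (eq_bigr (fun _ => v k : nat)) => [|p pk]; last by rewrite F_at_v (line_through_eq net pk).
    by rewrite sum_nat_const; case: net => _ -> _ _ _; rewrite mulnC.
  rewrite -card_set_sum card_set_pair (eq_bigr (fun _ => lam)) //.
  by rewrite sum_nat_const card_ord mulnC.
rewrite card_setin_sum (eq_bigr (fun p => v (line_through lines t' p) : nat)) => [|p _].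
  rewrite (sum_line_transversal net j (fun k => v k : nat)) //.
  by apply/eqP; rewrite -(eqn_pmul2r (ltn0Sn n)) big_distrl count_ones.
by rewrite F_at_v.
Qed.
End RefinedSquare.
End Refinement.

Section Quadrants.
Variables (P : finType) (lines : 'I_4 -> 'I_10 -> {set P}) (s0 s1 : {perm 'I_10}).
Hypothesis net : is_net lines.

Local Notation cell_at := (cell_of lines s0 s1).

Lemma relational_line_quadrants (F G : 'I_10 -> 'I_10 -> bool) (t t' : 'I_4) j :
  (forall i j, F i j (+) G i j = (i < 4) (+) (j < 4)) ->
  (forall i, #|[set j | G i j]| = 4) ->
  (forall j p q, p \in lines t' j -> q \in lines t' j ->
     G (cell_at p).1 (cell_at p).2 = G (cell_at q).1 (cell_at q).2) ->
  t != t' -> t != cls 0 -> t != cls 1 ->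
  (forall p, p \in lines t j -> F (cell_at p).1 (cell_at p).2) ->
  [/\ #|[set p in lines t j | Q1 (cell_at p)]| = 1,
      #|[set p in lines t j | Q2 (cell_at p)]| = 3,
      #|[set p in lines t j | Q3 (cell_at p)]| = 3 &
      #|[set p in lines t j | Q4 (cell_at p)]| = 3].
Proof.
move=> xor_FG G_rows G_const neq_tt' neq_t0 neq_t1 F_line.
have sum_split (a b c : P -> nat) : (forall p, p \in lines t j -> a p = b p + c p) ->
    \sum_(p in lines t j) a p = \sum_(p in lines t j) b p + \sum_(p in lines t j) c p.
  by move=> abc; rewrite -big_split; apply: eq_bigr.
have top := sum_line_rows s0 s1 net j (fun i : 'I_10 => (i < 4 : nat)) neq_t0.
have bottom := sum_line_rows s0 s1 net j (fun i : 'I_10 => (4 <= i : nat)) neq_t0.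
have left := sum_line_cols s0 s1 net j (fun i : 'I_10 => (i < 4 : nat)) neq_t1.
have ones_G := card_refined_line net G_rows G_const j neq_tt'.
rewrite -!card_set_sum card_ord_lt4 card_ord_ge4 in top bottom left.
rewrite card_setin_sum in ones_G; rewrite !card_setin_sum.
rewrite (sum_split _ (fun p => Q1 (cell_at p) : nat) (fun p => Q2 (cell_at p) : nat)) in top;
  last by move=> p _; rewrite /Q1 /Q2; case: (ltnP (cell_at p).1 4); case: (ltnP (cell_at p).2 4).
rewrite (sum_split _ (fun p => Q3 (cell_at p) : nat) (fun p => Q4 (cell_at p) : nat)) in bottom;
  last by move=> p _; rewrite /Q3 /Q4; case: (ltnP (cell_at p).1 4); case: (ltnP (cell_at p).2 4).
rewrite (sum_split _ (fun p => Q1 (cell_at p) : nat) (fun p => Q3 (cell_at p) : nat)) in left;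
  last by move=> p _; rewrite /Q1 /Q3; case: (ltnP (cell_at p).1 4); case: (ltnP (cell_at p).2 4).
(* on a relational line G holds exactly in Q1 and Q4, by the parity of the weight *)
rewrite (sum_split _ (fun p => Q1 (cell_at p) : nat) (fun p => Q4 (cell_at p) : nat)) in ones_G;
  last first.
  move=> p /F_line F_p; have := xor_FG (cell_at p).1 (cell_at p).2.
  by rewrite F_p /Q1 /Q4; case: (ltnP (cell_at p).1 4); case: (ltnP (cell_at p).2 4); case: (G _ _).
split; lia.
Qed.
End Quadrants.

Section Template44.
Variables F0 F1 : 'I_10 -> 'I_10 -> bool.
Hypothesis tmpl : template4 4 4 4 4 F0 F1.

Lemma template44_xor i j : F0 i j (+) F1 i j = (i < 4) (+) (j < 4).
Proof. exact: template4_xor tmpl isT i j. Qed.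

Lemma relational_row_types (i : 'I_10) : i < 4 ->
  [/\ #|[set j : 'I_10 | (j < 4) && (F0 i j && F1 i j)]| = 1,
      #|[set j : 'I_10 | (4 <= j) && (F0 i j && ~~ F1 i j)]| = 3 &
      #|[set j : 'I_10 | (4 <= j) && (~~ F0 i j && F1 i j)]| = 3].
Proof.
case: tmpl => _ [[F0_rows _] [[F1_rows _] _]] i4.
apply: card_split_differ_ge4 (F0_rows i) (F1_rows i) => j.
by rewrite template44_xor i4 ltnNge addTb negbK.
Qed.

Lemma relational_col_types (j : 'I_10) : j < 4 ->
  [/\ #|[set i : 'I_10 | (i < 4) && (F0 i j && F1 i j)]| = 1,
      #|[set i : 'I_10 | (4 <= i) && (F0 i j && ~~ F1 i j)]| = 3 &
      #|[set i : 'I_10 | (4 <= i) && (~~ F0 i j && F1 i j)]| = 3].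
Proof.
case: tmpl => _ [[_ F0_cols] [[_ F1_cols] _]] j4.
apply: card_split_differ_ge4 (F0_cols j) (F1_cols j) => i.
by rewrite template44_xor j4 addbT ltnNge negbK.
Qed.

Lemma nonrelational_row_types (i : 'I_10) : 4 <= i ->
  [/\ #|[set j : 'I_10 | (j < 4) && (~~ F0 i j && F1 i j)]| = 2,
      #|[set j : 'I_10 | (j < 4) && (F0 i j && ~~ F1 i j)]| = 2,
      #|[set j : 'I_10 | (4 <= j) && (F0 i j && F1 i j)]| = 2 &
      #|[set j : 'I_10 | (4 <= j) && (~~ F0 i j && ~~ F1 i j)]| = 4].
Proof.
case: tmpl => _ [[F0_rows _] [[F1_rows _] _]] i4.
apply: card_split_differ_lt4 (F0_rows i) (F1_rows i) => j.
by rewrite template44_xor [i < 4]ltnNge i4.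
Qed.

Lemma nonrelational_col_types (j : 'I_10) : 4 <= j ->
  [/\ #|[set i : 'I_10 | (i < 4) && (~~ F0 i j && F1 i j)]| = 2,
      #|[set i : 'I_10 | (i < 4) && (F0 i j && ~~ F1 i j)]| = 2,
      #|[set i : 'I_10 | (4 <= i) && (F0 i j && F1 i j)]| = 2 &
      #|[set i : 'I_10 | (4 <= i) && (~~ F0 i j && ~~ F1 i j)]| = 4].
Proof.
case: tmpl => _ [[_ F0_cols] [[_ F1_cols] _]] j4.
apply: card_split_differ_lt4 (F0_cols j) (F1_cols j) => i.
by rewrite template44_xor [j < 4]ltnNge j4 addbF.
Qed.
Lemma type1111E c : (ctype 4 4 F0 F1 c == (true, true, true, true)) =
  [&& c.1 < 4, c.2 < 4, F0 c.1 c.2 & F1 c.1 c.2].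
Proof. by rewrite /ctype; case: (c.1 < 4); case: (c.2 < 4); case: (F0 _ _); case: (F1 _ _). Qed.

Lemma card_type1111 : #|[set c | ctype 4 4 F0 F1 c == (true, true, true, true)]| = 4.
Proof.
rewrite (@eq_finset _ _ _ type1111E).
rewrite (card_set_pair (fun i j : 'I_10 => [&& i < 4, j < 4, F0 i j & F1 i j])).
transitivity (\sum_(i : 'I_10) (i < 4 : nat)); last by rewrite -card_set_sum card_ord_lt4.
apply: eq_bigr => i _.
case: (ltnP i 4) => [i4 | _]; last by apply: eq_card0 => j; rewrite inE.
by case: (relational_row_types i4).
Qed.

Lemma type1111_distinct (c c' : cell 10) :
  ctype 4 4 F0 F1 c = (true, true, true, true) ->
  ctype 4 4 F0 F1 c' = (true, true, true, true) ->
  c != c' -> c.1 != c'.1 /\ c.2 != c'.2.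
Proof.
case: c c' => [i j] [i' j'] /eqP + /eqP + neq.
rewrite !type1111E => /and4P [/= i4 j4 F0ij F1ij] /and4P [/= i4' j4' F0ij' F1ij'].
split; apply: contra_neq neq => /= eq_ii'.
  subst i'; have [/eq_leq/card_le1_eqP one_col _ _] := relational_row_types i4.
  by rewrite (one_col j j') // !inE ?j4 ?j4' ?F0ij ?F1ij ?F0ij' ?F1ij'.
subst j'; have [/eq_leq/card_le1_eqP one_row _ _] := relational_col_types j4.
by rewrite (one_row i i') // !inE ?i4 ?i4' ?F0ij ?F1ij ?F0ij' ?F1ij'.
Qed.
End Template44.

Theorem mainTheorem4 (F0 F1 : 'I_10 -> 'I_10 -> bool) (P : finType)
  (lines : 'I_4 -> 'I_10 -> {set P}) (s0 s1 : {perm 'I_10}) :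
  template4 4 4 4 4 F0 F1 ->
  is_net lines ->
  refines lines F0 F1 s0 s1 ->
  let ty := ctype 4 4 F0 F1 in
  (* (i) *)
  (#|[set c : cell 10 | ty c == (true, true, true, true)]| = 4 /\
   forall c c' : cell 10, ty c = (true, true, true, true) ->
     ty c' = (true, true, true, true) -> c != c' ->
     c.1 != c'.1 /\ c.2 != c'.2) /\
  (* (ii) *)
  (forall i : 'I_10, i < 4 ->
     #|[set j : 'I_10 | (4 <= j) && (F0 i j && ~~ F1 i j)]| = 3 /\
     #|[set j : 'I_10 | (4 <= j) && (~~ F0 i j && F1 i j)]| = 3) /\
  (forall j : 'I_10, j < 4 ->
     #|[set i : 'I_10 | (4 <= i) && (F0 i j && ~~ F1 i j)]| = 3 /\
     #|[set i : 'I_10 | (4 <= i) && (~~ F0 i j && F1 i j)]| = 3) /\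
  (* (iii) *)
  (forall t, t \in [:: 2; 3] -> forall j : 'I_10, relational_line lines F0 F1 s0 s1 t j ->
     [/\ #|[set p in lines (cls t) j | Q1 (cell_of lines s0 s1 p)]| = 1,
         #|[set p in lines (cls t) j | Q2 (cell_of lines s0 s1 p)]| = 3,
         #|[set p in lines (cls t) j | Q3 (cell_of lines s0 s1 p)]| = 3 &
         #|[set p in lines (cls t) j | Q4 (cell_of lines s0 s1 p)]| = 3]) /\
  (* (iv) *)
  (forall j : 'I_10, 4 <= j ->
     #|[set i : 'I_10 | (i < 4) && (~~ F0 i j && F1 i j)]| = 2 /\
     #|[set i : 'I_10 | (i < 4) && (F0 i j && ~~ F1 i j)]| = 2) /\
  (forall i : 'I_10, 4 <= i ->
     #|[set j : 'I_10 | (j < 4) && (~~ F0 i j && F1 i j)]| = 2 /\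
     #|[set j : 'I_10 | (j < 4) && (F0 i j && ~~ F1 i j)]| = 2) /\
  (forall i : 'I_10, 4 <= i ->
     #|[set j : 'I_10 | (4 <= j) && (F0 i j && F1 i j)]| = 2 /\
     #|[set j : 'I_10 | (4 <= j) && (~~ F0 i j && ~~ F1 i j)]| = 4) /\
  (forall j : 'I_10, 4 <= j ->
     #|[set i : 'I_10 | (4 <= i) && (F0 i j && F1 i j)]| = 2 /\
     #|[set i : 'I_10 | (4 <= i) && (~~ F0 i j && ~~ F1 i j)]| = 4).
Proof.
move=> tmpl net refined ty.
have xor01 := template44_xor tmpl.
case: (tmpl) => _ [[F0_rows _] [[F1_rows _] _]].
split; first by split; [exact: card_type1111 | exact: type1111_distinct].
split; first by move=> i /(relational_row_types tmpl) [].
split; first by move=> j /(relational_col_types tmpl) [].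
split.
  have xor10 i j : F1 i j (+) F0 i j = (i < 4) (+) (j < 4) by rewrite addbC xor01.
  move=> t; rewrite !inE => /orP [] /eqP -> j rel.
    apply: (relational_line_quadrants net xor01 F1_rows (fun j => refined 3 isT j)) => //;
      exact: cls_neq.
  apply: (relational_line_quadrants net xor10 F0_rows (fun j => refined 2 isT j)) => //;
    exact: cls_neq.
split; first by move=> j /(nonrelational_col_types tmpl) [].
split; first by move=> i /(nonrelational_row_types tmpl) [].
split; first by move=> i /(nonrelational_row_types tmpl) [].
by move=> j /(nonrelational_col_types tmpl) [].
Qed.
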